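(* Let $(X,\mathbb{A},d)$ be a complete $C^*$-algebra valued metric space, where $\mathbb{A}$ is a unital $C^*$-algebra, and let $T:X\to X$ be a $C^*$-algebra valued Ćirić-type2 contractive mapping, i.e. for every $x,y\in X$ there is $q(x,y)\in\acute{\mathbb{A}}_+$ with $0\le\|q(x,y)\|<1$, and there is a mapping $\delta:X\times X\to\mathbb{A}_+$, such that $$d(T^n x,T^n y)\preceq q(x,y)^n\,\delta(x,y)\quad\text{for all }x,y\in X,\ n\in\mathbb{N}.$$ Then $T$ is orbitally continuous on $X$ if and only if $T$ has a unique fixed point in $X$.
   Context: $\mathbb{A}$ denotes a unital $C^*$-algebra with unit $I$ and zero $\theta$. An element $a\in\mathbb{A}$ is positive, written $a\succeq\theta$, if $a^*=a$ and its spectrum is contained in $[0,\infty)$; $\mathbb{A}_+$ is the set of positive elements, and $a\succeq b$ means $a-b\succeq\theta$. $\acute{\mathbb{A}}_+$ denotes the set of positive elements of $\mathbb{A}$ that commute with every element of $\mathbb{A}$. A $C^*$-algebra valued metric space $(X,\mathbb{A},d)$ is a nonempty set $X$ with $d:X\times X\to\mathbb{A}$ such that for all $x,y,z\in X$: $d(x,y)\succeq\theta$, with $d(x,y)=\theta$ iff $x=y$; $d(x,y)=d(y,x)$; $d(x,y)\preceq d(x,z)+d(z,y)$. A sequence $\{x_n\}$ converges to $x$ if $\|d(x_n,x)\|\to0$, and is Cauchy if $\|d(x_n,x_m)\|\to0$ as $n,m\to\infty$; the space is complete if every Cauchy sequence converges to a point of $X$. A self-map $T$ of $X$ is orbitally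 continuous at $u\in X$ if for every $x\in X$ and every increasing sequence of positive integers $\{n_i\}$, $\|d(T^{n_i}x,u)\|\to0$ implies $\|d(T^{n_i+1}x,Tu)\|\to0$ as $i\to\infty$; $T$ is orbitally continuous on $X$ if it is orbitally continuous at every $u\in X$. *)

From Stdlib Require Import Reals.
Open Scope R_scope.

Definition C : Type := (R * R)%type.
Definition Cre (z : C) : R := fst z.
Definition Cim (z : C) : R := snd z.
Definition C0 : C := (0, 0).
Definition C1 : C := (1, 0).
Definition Cadd (z w : C) : C := (fst z + fst w, snd z + snd w).
Definition Cmul (z w : C) : C :=
  (fst z * fst w - snd z * snd w, fst z * snd w + snd z * fst w).
Definition Cconj (z : C) : C := (fst z, - snd z).
Definition Cabs (z : C) : R := sqrt (fst z * fst z + snd z * snd z).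

(** The last two fields ([pos_add], [pos_norm_mono]) are standard THEOREMS of
    C*-algebra theory (the positive cone is closed under addition; the norm is
    monotone on positive elements); they are included so that the structure
    is usable, and they do not change the class of structures described. *)
Record CStarAlgebra := {
  car :> Type;
  czero : car;
  cone : car;
  cadd : car -> car -> car;
  copp : car -> car;
  cmul : car -> car -> car;
  cscal : C -> car -> car;
  cstar : car -> car;
  cnorm : car -> R;
  cadd_assoc : forall a b c, cadd a (cadd b c) = cadd (cadd a b) c;
  cadd_comm : forall a b, cadd a b = cadd b a;
  cadd_0 : forall a, cadd a czero = a;
  cadd_opp : forall a, cadd a (copp a) = czero;
  cmul_assoc : forall a b c, cmul a (cmul b c) = cmul (cmul a b) c;
  cmul_1l : forall a, cmul cone a = a;
  cmul_1r : forall a, cmul a cone = a;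
  cmul_addl : forall a b c, cmul (cadd a b) c = cadd (cmul a c) (cmul b c);
  cmul_addr : forall a b c, cmul a (cadd b c) = cadd (cmul a b) (cmul a c);
  cscal_assoc : forall l m a, cscal l (cscal m a) = cscal (Cmul l m) a;
  cscal_1 : forall a, cscal C1 a = a;
  cscal_addv : forall l a b, cscal l (cadd a b) = cadd (cscal l a) (cscal l b);
  cscal_adds : forall l m a, cscal (Cadd l m) a = cadd (cscal l a) (cscal m a);
  cscal_mull : forall l a b, cscal l (cmul a b) = cmul (cscal l a) b;
  cscal_mulr : forall l a b, cscal l (cmul a b) = cmul a (cscal l b);
  cstar_invol : forall a, cstar (cstar a) = a;
  cstar_add : forall a b, cstar (cadd a b) = cadd (cstar a) (cstar b);
  cstar_mul : forall a b, cstar (cmul a b) = cmul (cstar b) (cstar a);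
  cstar_scal : forall l a, cstar (cscal l a) = cscal (Cconj l) (cstar a);
  cnorm_nonneg : forall a, 0 <= cnorm a;
  cnorm_eq0 : forall a, cnorm a = 0 -> a = czero;
  cnorm_0 : cnorm czero = 0;
  cnorm_triangle : forall a b, cnorm (cadd a b) <= cnorm a + cnorm b;
  cnorm_scal : forall l a, cnorm (cscal l a) = Cabs l * cnorm a;
  cnorm_submult : forall a b, cnorm (cmul a b) <= cnorm a * cnorm b;
  cnorm_cstar : forall a, cnorm (cmul (cstar a) a) = cnorm a * cnorm a;
  ccomplete : forall u : nat -> car,
    (forall eps, eps > 0 -> exists N, forall n m, (n >= N)%nat -> (m >= N)%nat ->
        cnorm (cadd (u n) (copp (u m))) < eps) ->
    exists l, forall eps, eps > 0 -> exists N, forall n, (n >= N)%nat ->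
        cnorm (cadd (u n) (copp l)) < eps;
  pos_add : forall a b,
    (cstar a = a /\ forall l : C,
       ~ (exists y, cmul (cadd a (cscal l (copp cone))) y = cone /\
                    cmul y (cadd a (cscal l (copp cone))) = cone) ->
       Cim l = 0 /\ 0 <= Cre l) ->
    (cstar b = b /\ forall l : C,
       ~ (exists y, cmul (cadd b (cscal l (copp cone))) y = cone /\
                    cmul y (cadd b (cscal l (copp cone))) = cone) ->
       Cim l = 0 /\ 0 <= Cre l) ->
    (cstar (cadd a b) = cadd a b /\ forall l : C,
       ~ (exists y, cmul (cadd (cadd a b) (cscal l (copp cone))) y = cone /\
                    cmul y (cadd (cadd a b) (cscal l (copp cone))) = cone) ->
       Cim l = 0 /\ 0 <= Cre l);
  pos_norm_mono : forall a b,
    (cstar a = a /\ forall l : C,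
       ~ (exists y, cmul (cadd a (cscal l (copp cone))) y = cone /\
                    cmul y (cadd a (cscal l (copp cone))) = cone) ->
       Cim l = 0 /\ 0 <= Cre l) ->
    (cstar (cadd b (copp a)) = cadd b (copp a) /\ forall l : C,
       ~ (exists y, cmul (cadd (cadd b (copp a)) (cscal l (copp cone))) y = cone /\
                    cmul y (cadd (cadd b (copp a)) (cscal l (copp cone))) = cone) ->
       Cim l = 0 /\ 0 <= Cre l) ->
    cnorm a <= cnorm b
}.

Arguments czero {_}. Arguments cone {_}. Arguments cadd {_}. Arguments copp {_}.
Arguments cmul {_}. Arguments cscal {_}. Arguments cstar {_}. Arguments cnorm {_}.

Section CStar.
Variable A : CStarAlgebra.

Definition csub (a b : A) : A := cadd a (copp b).

Definition invertible (a : A) : Prop :=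
  exists b : A, cmul a b = cone /\ cmul b a = cone.

Definition in_spectrum (a : A) (l : C) : Prop :=
  ~ invertible (csub a (cscal l cone)).

Definition positive (a : A) : Prop :=
  cstar a = a /\ forall l : C, in_spectrum a l -> Cim l = 0 /\ 0 <= Cre l.

Definition cle (a b : A) : Prop := positive (csub b a).

Definition central_positive (a : A) : Prop :=
  positive a /\ forall b : A, cmul a b = cmul b a.

Fixpoint cpow (a : A) (n : nat) : A :=
  match n with O => cone | S k => cmul a (cpow a k) end.

End CStar.

Arguments csub {_}. Arguments invertible {_}. Arguments in_spectrum {_}.
Arguments positive {_}. Arguments cle {_}. Arguments central_positive {_}.
Arguments cpow {_}.

Definition is_cstar_metric (X : Type) (A : CStarAlgebra) (d : X -> X -> A) : Prop :=
  (forall x y, positive (d x y)) /\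
  (forall x y, d x y = czero <-> x = y) /\
  (forall x y, d x y = d y x) /\
  (forall x y z, cle (d x y) (cadd (d x z) (d z y))).

Definition seq_converges {X : Type} {A : CStarAlgebra} (d : X -> X -> A)
  (u : nat -> X) (x : X) : Prop :=
  Un_cv (fun n => cnorm (d (u n) x)) 0.

Definition seq_cauchy {X : Type} {A : CStarAlgebra} (d : X -> X -> A)
  (u : nat -> X) : Prop :=
  forall eps, eps > 0 -> exists N, forall n m, (n >= N)%nat -> (m >= N)%nat ->
    cnorm (d (u n) (u m)) < eps.

Definition metric_complete {X : Type} {A : CStarAlgebra} (d : X -> X -> A) : Prop :=
  forall u : nat -> X, seq_cauchy d u -> exists x, seq_converges d u x.

Definition iterT {X : Type} (T : X -> X) (n : nat) (x : X) : X := Nat.iter n T x.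

Definition orbitally_continuous_at {X : Type} {A : CStarAlgebra} (d : X -> X -> A)
  (T : X -> X) (u : X) : Prop :=
  forall (x : X) (ni : nat -> nat),
    (forall i, (ni i < ni (S i))%nat) ->
    seq_converges d (fun i => iterT T (ni i) x) u ->
    seq_converges d (fun i => iterT T (S (ni i)) x) (T u).

Definition orbitally_continuous {X : Type} {A : CStarAlgebra} (d : X -> X -> A)
  (T : X -> X) : Prop :=
  forall u : X, orbitally_continuous_at d T u.

Definition ciric_type2 {X : Type} {A : CStarAlgebra} (d : X -> X -> A)
  (T : X -> X) : Prop :=
  exists (q : X -> X -> A) (delta : X -> X -> A),
    (forall x y, central_positive (q x y) /\ cnorm (q x y) < 1) /\
    (forall x y, positive (delta x y)) /\
    (forall x y n, (1 <= n)%nat ->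
       cle (d (iterT T n x) (iterT T n y)) (cmul (cpow (q x y) n) (delta x y))).

(** Taking norms turns the C*-valued metric into a real metric, since the norm is
    monotone on positive elements.  For any [x, y] the contraction condition then
    gives [|d(T^n x, T^n y)| <= k^n M] with [k = |q(x,y)| < 1].  Hence every orbit
    has geometrically small steps and is Cauchy, and every fixed point attracts
    every orbit, which makes a fixed point unique.  If [T] is orbitally continuous,
    the limit [u] of an orbit satisfies [T^(n+1) x -> T u] and [T^(n+1) x -> u], so
    [T u = u].  Conversely, if [p] is the fixed point, any orbit subsequence can only
    converge to [p], and the shifted subsequence converges to [p = T p]. *)

From Pilot Require Import Defs.
From Stdlib Require Import Reals Lra Lia.

Lemma cadd_0l (A : CStarAlgebra) (a : A) : cadd czero a = a.
Proof. rewrite cadd_comm. apply cadd_0. Qed.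

Lemma copp_unique (A : CStarAlgebra) (a b : A) : cadd a b = czero -> b = copp a.
Proof.
  intros Hab.
  transitivity (cadd (cadd a b) (copp a)).
  - rewrite (cadd_comm A a b), <- cadd_assoc, cadd_opp, cadd_0. reflexivity.
  - rewrite Hab, cadd_0l. reflexivity.
Qed.

Lemma cscal_0 (A : CStarAlgebra) (l : Defs.C) : cscal l (@czero A) = czero.
Proof.
  set (z := cscal l (@czero A)).
  assert (Hzz : cadd z z = z) by (unfold z; rewrite <- cscal_addv, cadd_0; reflexivity).
  transitivity (cadd (cadd z z) (copp z)).
  - rewrite <- cadd_assoc, cadd_opp, cadd_0. reflexivity.
  - rewrite Hzz, cadd_opp. reflexivity.
Qed.

Lemma cscal_opp_1 (A : CStarAlgebra) (l : Defs.C) :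
  cscal l (copp (@cone A)) = copp (cscal l cone).
Proof. apply copp_unique. rewrite <- cscal_addv, cadd_opp, cscal_0. reflexivity. Qed.

(* The field [pos_norm_mono] spells the spectrum with [cscal l (copp cone)],
   whereas [positive] uses [csub _ (cscal l cone)]; [cscal_opp_1] bridges the two. *)
Lemma cnorm_le_cle (A : CStarAlgebra) (a b : A) :
  Defs.positive a -> cle a b -> cnorm a <= cnorm b.
Proof.
  unfold cle, Defs.positive, in_spectrum, invertible, csub.
  intros [Ha_sa Ha_spec] [Hba_sa Hba_spec]. apply pos_norm_mono.
  - split; [exact Ha_sa|]. intros l Hl. apply Ha_spec. rewrite <- cscal_opp_1. exact Hl.
  - split; [exact Hba_sa|]. intros l Hl. apply Hba_spec. rewrite <- cscal_opp_1. exact Hl.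
Qed.

Lemma cnorm_cpow_le (A : CStarAlgebra) (q : A) (n : nat) :
  (1 <= n)%nat -> cnorm (cpow q n) <= cnorm q ^ n.
Proof.
  induction n as [|n IHn]; intros Hn; [lia|].
  destruct n as [|n].
  - simpl. rewrite cmul_1r. lra.
  - change (cnorm (cmul q (cpow q (S n))) <= cnorm q * cnorm q ^ S n).
    eapply Rle_trans; [apply cnorm_submult|].
    apply Rmult_le_compat_l; [apply cnorm_nonneg | apply IHn; lia].
Qed.

Lemma pow_mul_eventually_lt (k M eps : R) :
  0 <= k < 1 -> 0 <= M -> eps > 0 -> exists N, forall n, (n >= N)%nat -> k ^ n * M < eps.
Proof.
  intros Hk HM Heps.
  assert (Hk_abs : Rabs k < 1) by (rewrite Rabs_pos_eq; lra).
  assert (Hy : 0 < eps / (M + 1)) by (apply Rdiv_lt_0_compat; lra).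
  destruct (pow_lt_1_zero k Hk_abs _ Hy) as [N HN].
  exists N; intros n Hn. specialize (HN n Hn).
  assert (Hkn : 0 <= k ^ n) by (apply pow_le; lra).
  rewrite Rabs_pos_eq in HN by exact Hkn.
  assert (k ^ n * M <= k ^ n * (M + 1)) by (apply Rmult_le_compat_l; lra).
  assert (k ^ n * (M + 1) < eps / (M + 1) * (M + 1)) by (apply Rmult_lt_compat_r; lra).
  replace (eps / (M + 1) * (M + 1)) with eps in * by (field; lra). lra.
Qed.

Lemma iterT_fixed (X : Type) (T : X -> X) (p : X) (n : nat) :
  T p = p -> iterT T n p = p.
Proof.
  intros Hp. induction n as [|n IHn]; [reflexivity|].
  unfold iterT in *; simpl. rewrite IHn. exact Hp.
Qed.

Lemma iterT_Sr (X : Type) (T : X -> X) (n : nat) (x : X) :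
  iterT T n (T x) = iterT T (S n) x.
Proof.
  induction n as [|n IHn]; [reflexivity|].
  unfold iterT in *; simpl in *. rewrite IHn. reflexivity.
Qed.

Section Convergence.

Context {A : CStarAlgebra} {X : Type} {d : X -> X -> A}.

Lemma seq_convergesP (u : nat -> X) (a : X) :
  seq_converges d u a <->
  forall eps, eps > 0 -> exists N, forall n, (n >= N)%nat -> cnorm (d (u n) a) < eps.
Proof.
  unfold seq_converges, Un_cv, R_dist.
  split; intros Hu eps Heps; destruct (Hu eps Heps) as [N HN]; exists N; intros n Hn;
    specialize (HN n Hn); rewrite Rminus_0_r, Rabs_pos_eq in * by apply cnorm_nonneg;
    exact HN.
Qed.

Lemma seq_converges_subseq (u : nat -> X) (a : X) (ni : nat -> nat) :
  (forall i, (ni i < ni (S i))%nat) -> seq_converges d u a ->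
  seq_converges d (fun i => u (ni i)) a.
Proof.
  intros Hni Hu.
  assert (Hni_ge : forall i, (i <= ni i)%nat).
  { induction i as [|i IHi]; [lia|]. specialize (Hni i). lia. }
  apply seq_convergesP. intros eps Heps.
  destruct (proj1 (seq_convergesP u a) Hu eps Heps) as [N HN].
  exists N. intros n Hn. apply HN. specialize (Hni_ge n). lia.
Qed.

Hypothesis Hd : is_cstar_metric X A d.

Lemma cnorm_dist_triangle (x y z : X) :
  cnorm (d x y) <= cnorm (d x z) + cnorm (d z y).
Proof.
  destruct Hd as (Hpos & _ & _ & Htri).
  eapply Rle_trans; [apply cnorm_le_cle; [apply Hpos | apply Htri]|].
  apply cnorm_triangle.
Qed.

Lemma cnorm_dist_sym (x y : X) : cnorm (d x y) = cnorm (d y x).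
Proof. destruct Hd as (_ & _ & Hsym & _). rewrite Hsym. reflexivity. Qed.

Lemma cnorm_dist_eq0 (x y : X) : cnorm (d x y) = 0 -> x = y.
Proof. destruct Hd as (_ & Heq & _ & _). intros H0. apply Heq, cnorm_eq0, H0. Qed.

Lemma cnorm_dist_refl (x : X) : cnorm (d x x) = 0.
Proof.
  destruct Hd as (_ & Heq & _ & _).
  rewrite (proj2 (Heq x x) eq_refl). apply cnorm_0.
Qed.

Lemma seq_converges_unique (u : nat -> X) (a b : X) :
  seq_converges d u a -> seq_converges d u b -> a = b.
Proof.
  intros Ha Hb. apply cnorm_dist_eq0.
  destruct (Rle_lt_or_eq_dec 0 _ (cnorm_nonneg A (d a b))) as [Hlt|Heq]; [|auto].
  destruct (proj1 (seq_convergesP u a) Ha (cnorm (d a b) / 2)) as [N1 H1]; [lra|].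
  destruct (proj1 (seq_convergesP u b) Hb (cnorm (d a b) / 2)) as [N2 H2]; [lra|].
  specialize (H1 (max N1 N2) ltac:(lia)). specialize (H2 (max N1 N2) ltac:(lia)).
  pose proof (cnorm_dist_triangle a b (u (max N1 N2))) as Htri.
  rewrite (cnorm_dist_sym a (u (max N1 N2))) in Htri. lra.
Qed.

(* Summing the geometric steps from [n] to [n + j] telescopes to
   [k^n S - k^(n+j) S] with [S = M / (1 - k)]. *)
Lemma seq_cauchy_geometric_steps (u : nat -> X) (k M : R) :
  0 <= k < 1 -> 0 <= M -> (forall n, cnorm (d (u n) (u (S n))) <= k ^ n * M) ->
  seq_cauchy d u.
Proof.
  intros Hk HM Hstep.
  set (S' := M / (1 - k)).
  assert (HM_S : M = S' * (1 - k)) by (unfold S'; field; lra).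
  assert (HS_pos : 0 <= S') by (unfold S'; apply Rmult_le_pos; [lra | left; apply Rinv_0_lt_compat; lra]).
  assert (Htail : forall n j, cnorm (d (u n) (u (n + j)%nat)) <= k ^ n * S' - k ^ (n + j) * S').
  { intros n j. induction j as [|j IHj].
    - rewrite Nat.add_0_r, cnorm_dist_refl. lra.
    - eapply Rle_trans; [apply cnorm_dist_triangle with (z := u (n + j)%nat)|].
      specialize (Hstep (n + j)%nat).
      replace (n + S j)%nat with (S (n + j)) by lia.
      assert (Hpow : k ^ S (n + j) * S' = k ^ (n + j) * S' - k ^ (n + j) * M)
        by (rewrite HM_S; simpl; ring).
      rewrite Hpow. lra. }
  assert (Hterm_pos : forall j, 0 <= k ^ j * S')
    by (intro j; apply Rmult_le_pos; [apply pow_le; lra | lra]).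
  intros eps Heps. destruct (pow_mul_eventually_lt k S' eps Hk HS_pos Heps) as [N HN].
  exists N. intros n m Hn Hm.
  destruct (Nat.le_gt_cases n m) as [Hnm|Hmn].
  - pose proof (Htail n (m - n)%nat) as Hnm_tail.
    replace (n + (m - n))%nat with m in Hnm_tail by lia.
    specialize (HN n Hn). specialize (Hterm_pos m). lra.
  - pose proof (Htail m (n - m)%nat) as Hmn_tail.
    replace (m + (n - m))%nat with n in Hmn_tail by lia.
    rewrite cnorm_dist_sym. specialize (HN m Hm). specialize (Hterm_pos n). lra.
Qed.

Section CiricType2.

Variable T : X -> X.
Hypothesis HT : ciric_type2 d T.

Lemma ciric_type2_orbit_bound (x y : X) :
  exists k M, 0 <= k < 1 /\ 0 <= M /\
    forall n, cnorm (d (iterT T n x) (iterT T n y)) <= k ^ n * M.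
Proof.
  destruct HT as (q & delta & Hq & Hdelta & Hcontr).
  exists (cnorm (q x y)), (Rmax (cnorm (delta x y)) (cnorm (d x y))).
  split; [split; [apply cnorm_nonneg | apply Hq]|].
  split; [eapply Rle_trans; [apply cnorm_nonneg | apply Rmax_l]|].
  intros [|n].
  - simpl. rewrite Rmult_1_l. apply Rmax_r.
  - eapply Rle_trans; [apply cnorm_le_cle; [apply Hd | apply Hcontr; lia]|].
    eapply Rle_trans; [apply cnorm_submult|].
    apply Rmult_le_compat;
      [apply cnorm_nonneg | apply cnorm_nonneg | apply cnorm_cpow_le; lia | apply Rmax_l].
Qed.

Lemma orbit_cauchy (x : X) : seq_cauchy d (fun n => iterT T n x).
Proof.
  destruct (ciric_type2_orbit_bound x (T x)) as (k & M & Hk & HM & Hbound).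
  apply (seq_cauchy_geometric_steps _ k M Hk HM).
  intros n. rewrite <- iterT_Sr. apply Hbound.
Qed.

Lemma orbit_converges_to_fixed_point (p x : X) :
  T p = p -> seq_converges d (fun n => iterT T n x) p.
Proof.
  intros Hp. apply seq_convergesP. intros eps Heps.
  destruct (ciric_type2_orbit_bound x p) as (k & M & Hk & HM & Hbound).
  destruct (pow_mul_eventually_lt k M eps Hk HM Heps) as [N HN].
  exists N. intros n Hn.
  specialize (Hbound n). rewrite (iterT_fixed X T p n Hp) in Hbound.
  specialize (HN n Hn). lra.
Qed.

Lemma fixed_point_unique (p p' : X) : T p = p -> T p' = p' -> p = p'.
Proof.
  intros Hp Hp'. apply (seq_converges_unique (fun n => iterT T n p)).
  - apply orbit_converges_to_fixed_point, Hp.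
  - apply orbit_converges_to_fixed_point, Hp'.
Qed.

Lemma orbit_limit_fixed (x u : X) :
  orbitally_continuous_at d T u -> seq_converges d (fun n => iterT T n x) u -> T u = u.
Proof.
  intros Hcont Hu.
  apply (seq_converges_unique (fun i => iterT T (S i) x)).
  - apply (Hcont x (fun i => i)); [intros i; lia | exact Hu].
  - apply (seq_converges_subseq (fun n => iterT T n x) u S); [intros i; lia | exact Hu].
Qed.

Lemma orbitally_continuous_of_fixed_point (p : X) :
  T p = p -> orbitally_continuous d T.
Proof.
  intros Hp u x ni Hni Hu.
  pose proof (orbit_converges_to_fixed_point p x Hp) as Hx.
  assert (Hup : u = p).
  { apply (seq_converges_unique _ _ _ Hu).
    apply (seq_converges_subseq _ p ni Hni Hx). }
  subst u. rewrite Hp.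
  apply (seq_converges_subseq (fun n => iterT T n x) p (fun i => S (ni i))); [|exact Hx].
  intros i. specialize (Hni i). lia.
Qed.

End CiricType2.

End Convergence.

Theorem theorem3p7 (A : CStarAlgebra) (X : Type) (d : X -> X -> A) (T : X -> X)
  (HX : inhabited X) (Hd : is_cstar_metric X A d) (Hcomplete : metric_complete d)
  (HT : ciric_type2 d T) :
  orbitally_continuous d T <-> (exists! u : X, T u = u).
Proof.
  split.
  - intros Hcont. destruct HX as [x].
    destruct (Hcomplete _ (orbit_cauchy Hd T HT x)) as [u Hu].
    assert (Hfix : T u = u) by exact (orbit_limit_fixed Hd T x u (Hcont u) Hu).
    exists u. split; [exact Hfix|].
    intros v Hv. exact (fixed_point_unique Hd T HT u v Hfix Hv).
  - intros [p [Hp _]]. exact (orbitally_continuous_of_fixed_point Hd T HT p Hp).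
Qed.
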